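(* For every integer $k \ge 4$ there exist positive constants $c_k$ and $d_k$ such that for every positive integer $n$, \[ c_k\cdot 2^{n/(k-1)} \le f(n,k) \le d_k \cdot 2^{n/\lceil k/2\rceil}. \]
   Context: A family $\mathcal{F}$ of subsets of $[n]=\{1,\ldots,n\}$ is $k$-wise intersecting if every collection of at most $k$ members of $\mathcal{F}$ has a common element; it is maximal $k$-wise intersecting if moreover no subset of $[n]$ outside $\mathcal{F}$ can be added while preserving this property. $f(n,k)$ denotes the smallest possible size of a maximal $k$-wise intersecting family of subsets of $[n]$. *)

From mathcomp Require Import all_boot.
From Stdlib Require Import Reals.
Set Implicit Arguments. Unset Strict Implicit. Unset Printing Implicit Defensive.

(* Families of subsets of [n], modelled as 'I_n = {0,...,n-1}. *)

Definition kwise_intersecting (n k : nat) (F : {set {set 'I_n}}) : bool :=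
  [forall G : {set {set 'I_n}},
     (G \subset F) && (0 < #|G| <= k) ==>
     [exists x : 'I_n, [forall A in G, x \in A]]].

Definition maximal_kwise_intersecting (n k : nat) (F : {set {set 'I_n}}) : bool :=
  kwise_intersecting k F &&
  [forall B : {set 'I_n}, (B \notin F) ==> ~~ kwise_intersecting k (B |: F)].

(* f_mkwi n k = f(n,k): the smallest size of a maximal k-wise intersecting family of
   subsets of [n] (minimum over all such families; the default value
   #|{set {set 'I_n}}| is irrelevant whenever such a family exists,
   e.g. the star {A | 0 \in A} for n >= 1). *)
Definition f_mkwi (n k : nat) : nat :=
  \big[minn/#|{set {set 'I_n}}|]_(F : {set {set 'I_n}} |
      maximal_kwise_intersecting k F) #|F|.

(* If F is maximal k-wise intersecting and X is not in F, then X
   misses the intersection of fewer than k members of F.  As F is an up-set,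
   enlarging each of them by the complement of X keeps them in F and turns their
   intersection into the complement of X.  So every set outside F is the
   complement of an intersection of k - 1 sets from F plus [n], which gives
   2^n <= |F| + (|F| + 1)^(k-1).

   Write k = 2t + e - 1, where e = 1 iff k is even.  When e = 1,
   set aside the point n - 1 (the pole).  Split the other points into the t
   residue classes mod t (the parts; each has at least two points once n > 2t).
   Let F consist of the sets whose complement lies in the pole or is a proper
   subset of a part.  Covering [n] by such complements takes two of them per
   part, plus one for the pole, i.e. k + 1 of them, so F is k-wise intersecting.
   If B is not in F, cut B into its points in the pole and, within each part,
   at most two pieces that are proper subsets of the part (one suffices if the
   complement of B meets the part).  Since the complement of B is not of the
   above form, at most k - 1 pieces are nonempty, and their complements are k - 1
   members of F whose intersection misses B; so F is maximal.  Finally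
   |F| <= (t + 1) 2^(n/t + 1).  For n <= 2t any maximal family already has at
   most 2^n <= 4^t members. *)

From mathcomp Require Import all_boot.
From Stdlib Require Import Reals Lra.
From mathcomp Require Import zify.
Set Implicit Arguments. Unset Strict Implicit. Unset Printing Implicit Defensive.

(* Importing Reals rebinds [^] in nat_scope to [Nat.pow]. *)
Local Notation "x ^ y" := (expn x y) : nat_scope.

Lemma bigcap_setU1 (T : finType) (A : {set T}) (G : {set {set T}}) :
  \bigcap_(X in A |: G) X = A :&: \bigcap_(X in G) X.
Proof. by rewrite bigcap_setU big_set1. Qed.

Lemma card_setU1_range (T : finType) (a : T) (A : {set T}) k :
  #|A| < k -> 0 < #|a |: A| <= k.
Proof.
move=> Ak; apply/andP; split; first by apply/card_gt0P; exists a; rewrite setU11.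
by rewrite cardsU1; move: Ak; case: (a \notin A); lia.
Qed.

Lemma card_finset (T : finType) : #|{set T}| = 2 ^ #|T|.
Proof. by rewrite -(cardsT T) -card_powerset powersetT cardsT. Qed.

Lemma bigcap_ffun (T : finType) m (G : {set {set T}}) :
  #|G| <= m ->
  exists2 f : {ffun 'I_m -> {set T}},
    (forall i, f i \in setT |: G) & \bigcap_i f i = \bigcap_(A in G) A.
Proof.
move=> Gm; exists [ffun i : 'I_m => nth setT (enum G) i] => [i|].
  rewrite ffunE in_setU1; case: (ltnP i (size (enum G))) => [iG | Gi].
    by rewrite -mem_enum mem_nth ?orbT.
  by rewrite nth_default ?eqxx.
apply/setP => x; apply/bigcapP/bigcapP => [xf A AG | xG i _].
  have iA : index A (enum G) < m by apply: leq_trans Gm; rewrite cardE index_mem mem_enum.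
  by have := xf (Ordinal iA) isT; rewrite ffunE nth_index ?mem_enum.
rewrite ffunE; case: (ltnP i (size (enum G))) => [iG | Gi].
  by apply: xG; rewrite -mem_enum mem_nth.
by rewrite nth_default ?inE.
Qed.

(** * Maximal k-wise intersecting families *)

Section Intersecting.

Variables n k : nat.
Implicit Types (F G : {set {set 'I_n}}) (A B X : {set 'I_n}).

Lemma kwise_intersectingPn F :
  reflect (exists2 G : {set {set 'I_n}},
             G \subset F & (0 < #|G| <= k) && (\bigcap_(A in G) A == set0))
          (~~ kwise_intersecting k F).
Proof.
apply: (iffP forallPn) => [[G] | [G sGF /andP [Gk /eqP G0]]].
  rewrite negb_imply => /andP [/andP [sGF Gk] /existsPn noX].
  exists G => //; rewrite Gk; apply/eqP/setP => x; rewrite in_set0.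
  apply/negbTE/bigcapP => inG; case/negP: (noX x).
  by apply/forallP => A; apply/implyP/inG.
exists G; rewrite negb_imply sGF Gk /=; apply/existsPn => x.
apply/negP => /forallP inG.
suff : x \in \bigcap_(A in G) A by rewrite G0 in_set0.
by apply/bigcapP => A; apply/implyP/inG.
Qed.

Lemma maximal_kwise_intersectingP F :
  kwise_intersecting k F ->
  reflect (forall B, B \notin F ->
             exists2 G : {set {set 'I_n}},
               G \subset F & (#|G| < k) && (B :&: \bigcap_(A in G) A == set0))
          (maximal_kwise_intersecting k F).
Proof.
move=> kF; rewrite /maximal_kwise_intersecting kF.
apply: (iffP forallP) => [maxF B BF | extF B]; last first.
  apply/implyP => /extF [G sGF /andP [Gk BG0]]; apply/kwise_intersectingPn.
  by exists (B |: G); rewrite ?setUS // card_setU1_range // bigcap_setU1.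
have /kwise_intersectingPn [G' sG'BF /andP [G'k G'0]] := implyP (maxF B) BF.
have BG' : B \in G'.
  apply: contraTT kF => BG'; apply/kwise_intersectingPn; exists G'; last by rewrite G'k.
  apply/subsetP => A AG'; have := subsetP sG'BF A AG'.
  by rewrite in_setU1 => /predU1P [eAB | //]; rewrite -eAB AG' in BG'.
exists (G' :\ B); first by rewrite -(setU1K BF) setSD.
rewrite -bigcap_setU1 setD1K // G'0 andbT.
by move: G'k; rewrite (cardsD1 B G') BG' add1n => /andP [].
Qed.

Lemma maximal_upclosed F A A' :
  maximal_kwise_intersecting k F -> A \in F -> A \subset A' -> A' \in F.
Proof.
move=> maxF AF sAA'; have /andP [kF _] := maxF.
apply: contraT => A'F.
have [G sGF /andP [Gk A'G0]] := elimT (maximal_kwise_intersectingP kF) maxF A' A'F.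
case/kwise_intersectingPn: kF; exists (A |: G); first by rewrite subUset sub1set AF.
rewrite card_setU1_range // bigcap_setU1 -subset0 -(eqP A'G0).
exact: setSI.
Qed.

Lemma maximal_compl_bigcap F X :
  maximal_kwise_intersecting k F -> X \notin F ->
  exists2 G : {set {set 'I_n}}, G \subset F & (#|G| < k) && (\bigcap_(A in G) A == ~: X).
Proof.
move=> maxF XF; have /andP [kF _] := maxF.
have [G sGF /andP [Gk /eqP XG0]] := elimT (maximal_kwise_intersectingP kF) maxF X XF.
exists [set ~: X :|: A | A in G].
  apply/subsetP => _ /imsetP [A AG ->].
  exact: maximal_upclosed maxF (subsetP sGF A AG) (subsetUr _ _).
rewrite (leq_ltn_trans (leq_imset_card _ _) Gk) big_imset_idem; last exact: setIid.
apply/eqP/setP => x; rewrite in_setC; case: (boolP (x \in X)) => xX /=.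
  apply/negbTE/bigcapP => xXG.
  suff : x \in X :&: \bigcap_(A in G) A by rewrite XG0 in_set0.
  by rewrite in_setI xX; apply/bigcapP => A AG; move: (xXG A AG); rewrite !inE xX.
by apply/bigcapP => A _; rewrite !inE xX.
Qed.

Lemma card_maximal_lower F :
  maximal_kwise_intersecting k F -> 2 ^ n <= #|F| + #|F|.+1 ^ k.-1.
Proof.
move=> maxF; have <- : #|{set 'I_n}| = 2 ^ n by rewrite card_finset card_ord.
rewrite -(cardsC F) leq_add2l.
pose U := [set ~: \bigcap_i f i | f : {ffun 'I_k.-1 -> {set 'I_n}} in ffun_on (setT |: F)].
apply: (@leq_trans #|U|).
  apply/subset_leq_card/subsetP => X; rewrite in_setC => XF.
  have [G sGF /andP [Gk /eqP GX]] := maximal_compl_bigcap maxF XF.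
  have [|f fG fGcap] := @bigcap_ffun _ k.-1 G; first by move: Gk; case: (k).
  apply/imsetP; exists f; last by rewrite fGcap GX setCK.
  apply/ffun_onP => i; move: (fG i); rewrite !in_setU1.
  by case/predU1P => [-> | /(subsetP sGF) ->]; rewrite ?eqxx ?orbT.
apply: leq_trans (leq_imset_card _ _) _.
rewrite card_ffun_on card_ord; case: k.-1 => // j.
by rewrite leq_exp2r // cardsU1 -add1n leq_add2r leq_b1.
Qed.

End Intersecting.

Lemma maximal_star n k (a : 'I_n) :
  1 < k -> maximal_kwise_intersecting k [set A : {set 'I_n} | a \in A].
Proof.
move=> k_gt1.
have kF : kwise_intersecting k [set A : {set 'I_n} | a \in A].
  apply: contraT => /kwise_intersectingPn [G sG /andP [_ /eqP G0]].
  suff : a \in \bigcap_(A in G) A by rewrite G0 in_set0.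
  by apply/bigcapP => A /(subsetP sG); rewrite inE.
apply/(maximal_kwise_intersectingP kF) => B; rewrite inE => aB.
exists [set [set a]]; first by rewrite sub1set inE set11.
rewrite cards1 k_gt1 big_set1; apply/eqP/setP => x; rewrite !inE.
by apply: contraNF aB => /andP [xB /eqP <-].
Qed.

Lemma bigmin_leq (I : eqType) (r : seq I) (P : pred I) (F : I -> nat) d j :
  j \in r -> P j -> \big[minn/d]_(i <- r | P i) F i <= F j.
Proof.
elim: r => [|x r IH] //; rewrite big_cons in_cons => /predU1P [<- -> | jr Pj].
  exact: geq_minl.
by case: (P x); [apply: leq_trans (geq_minr _ _) (IH jr Pj) | apply: IH].
Qed.

Lemma f_mkwi_leq n k (F : {set {set 'I_n}}) :
  maximal_kwise_intersecting k F -> f_mkwi n k <= #|F|.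
Proof. exact: bigmin_leq (mem_index_enum F). Qed.

Lemma f_mkwi_attained n k (F0 : {set {set 'I_n}}) :
  maximal_kwise_intersecting k F0 ->
  exists2 F : {set {set 'I_n}}, maximal_kwise_intersecting k F & f_mkwi n k = #|F|.
Proof.
move=> maxF0.
pose attained m := exists2 F : {set {set 'I_n}}, maximal_kwise_intersecting k F & m = #|F|.
have [//|f_dflt] : attained (f_mkwi n k) \/ f_mkwi n k = #|{set {set 'I_n}}|.
  rewrite /f_mkwi; apply: (big_ind (fun m => attained m \/ m = #|{set {set 'I_n}}|)).
  - by right.
  - by move=> m1 m2 m1P m2P; rewrite /minn; case: ifP.
  - by move=> F maxF; left; exists F.
exists F0 => //; apply/eqP; rewrite eqn_leq (f_mkwi_leq maxF0) /= f_dflt.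
apply: leq_trans (max_card _) _.
apply/ltnW; rewrite [X in _ < X]card_finset; exact: ltn_expl.
Qed.

(** * The construction *)

Lemma two_covering_sets (T : finType) (S : {set T}) (Ys : {set {set T}}) :
  S != set0 -> S \subset \bigcup_(Y in Ys) Y -> {in Ys, forall Y : {set T}, ~~ (S \subset Y)} ->
  exists Y1 Y2, [/\ Y1 \in Ys, Y2 \in Ys, Y1 != Y2 & (Y1 :&: S != set0) && (Y2 :&: S != set0)].
Proof.
case/set0Pn => x xS /subsetP SYs notsupS.
have /bigcupP [Y1 Y1s xY1] := SYs x xS.
have /subsetPn [y yS yY1] := notsupS Y1 Y1s.
have /bigcupP [Y2 Y2s yY2] := SYs y yS.
exists Y1, Y2; split => //; first by apply: contraNneq yY1 => ->.
by apply/andP; split; apply/set0Pn; [exists x | exists y]; rewrite inE ?xY1 ?yY2.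
Qed.

Lemma card_bigcup_leq (I T : finType) (S : I -> {set T}) m :
  (forall i, #|S i| <= m) -> #|\bigcup_i S i| <= #|I| * m.
Proof.
move=> Sm; apply: (@leq_trans (\sum_i #|S i|)).
  elim/big_rec2: _ => [|i U c _ Uc]; first by rewrite cards0.
  by rewrite (leq_trans (leq_card_setU _ _).1) ?leq_add2l.
by rewrite -sum_nat_const leq_sum.
Qed.

Section Construction.

Variables (n t : nat) (e : bool).
Hypotheses (t_gt0 : 0 < t) (t2_lt_n : t.*2 < n).

Definition pole : {set 'I_n} := [set x : 'I_n | e && (x == n.-1 :> nat)].
Definition part (i : nat) : {set 'I_n} := [set x : 'I_n | (x \notin pole) && (x %% t == i)].
Definition small (Y : {set 'I_n}) : bool :=
  (Y \subset pole) || [exists i : 'I_t, Y \proper part i].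
Definition fam : {set {set 'I_n}} := [set A | small (~: A)].

Lemma mem_part i x : (x \in part i) = (x \notin pole) && (x %% t == i).
Proof. by rewrite inE. Qed.

Let cls (x : 'I_n) : 'I_t := Ordinal (ltn_pmod x t_gt0).

Lemma part_cls x : x \notin pole -> x \in part (cls x).
Proof. by move=> xpole; rewrite mem_part xpole /=. Qed.

Lemma part_inj (i j : 'I_t) x : x \in part i -> x \in part j -> i = j.
Proof.
rewrite !mem_part => /andP [_ /eqP xi] /andP [_ /eqP xj].
by apply: val_inj; rewrite /= -xi -xj.
Qed.

Lemma pole_eq x y : x \in pole -> y \in pole -> x = y.
Proof.
rewrite !inE => /andP [_ /eqP xz] /andP [_ /eqP yz].
by apply: val_inj; rewrite /= xz yz.
Qed.

Lemma card_part_gt1 (i : 'I_t) : 1 < #|part i|.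
Proof.
have i_lt : i < n.-1 by move: (ltn_ord i); lia.
have it_lt : i + t < n.-1 by move: (ltn_ord i); lia.
apply/card_gt1P; exists (Ordinal (leq_trans i_lt (leq_pred n))).
exists (Ordinal (leq_trans it_lt (leq_pred n))).
rewrite !mem_part !inE /= (ltn_eqF i_lt) (ltn_eqF it_lt) !andbF modnDr.
by rewrite modn_small // eqxx; split => //; apply/eqP => -[]; lia.
Qed.

Lemma small_proper Y (i : 'I_t) x :
  small Y -> x \in Y -> x \in part i -> Y \proper part i.
Proof.
case/orP => [/subsetP Ypole | /existsP [j Yj]] xY xi.
  by move: xi; rewrite mem_part Ypole.
by rewrite (part_inj xi (subsetP (proper_sub Yj) x xY)).
Qed.

Lemma small_not_supset Y (i : 'I_t) : small Y -> ~~ (part i \subset Y).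
Proof.
move=> smY; apply/negP => sub; have /card_gt1P [x [_ [xi _ _]]] := card_part_gt1 i.
by have := small_proper smY (subsetP sub x xi) xi; rewrite properE sub andbF.
Qed.

Lemma small_cover_meet_parts (Ys : {set {set 'I_n}}) :
  {in Ys, forall Y, small Y} -> \bigcup_(Y in Ys) Y = setT ->
  t.*2 <= #|[set Y in Ys | [exists i : 'I_t, Y :&: part i != set0]]|.
Proof.
move=> smYs coverYs.
have pairs (i : 'I_t) : exists Y : {set 'I_n} * {set 'I_n},
    [/\ Y.1 \in Ys, Y.2 \in Ys, Y.1 != Y.2 & (Y.1 :&: part i != set0) && (Y.2 :&: part i != set0)].
  have [|||Y1 [Y2 HY]] := @two_covering_sets _ (part i) Ys; last by exists (Y1, Y2).
  - by rewrite -card_gt0 ltnW ?card_part_gt1.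
  - by rewrite coverYs subsetT.
  - by move=> Y /smYs /small_not_supset.
have [Y HY] := fin_all_exists pairs.
pose h (p : 'I_t * bool) := if p.2 then (Y p.1).1 else (Y p.1).2.
have h_in p : h p \in Ys by rewrite /h; case: (HY p.1); case: p.2.
have h_meets p : h p :&: part p.1 != set0.
  by rewrite /h; case: (HY p.1) => _ _ _ /andP []; case: p.2.
have h_inj : injective h.
  move=> [i b] [j c] hij; have eij : i = j.
    have /set0Pn [x] := h_meets (i, b); rewrite inE => /andP [xh xi].
    have /set0Pn [y] := h_meets (j, c); rewrite inE -hij => /andP [yh yj].
    have hj := small_proper (smYs _ (h_in (i, b))) yh yj.
    exact: part_inj xi (subsetP (proper_sub hj) x xh).
  subst j; move: hij; rewrite /h /=; case: (HY i) => _ _ Y12 _.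
  by case: b; case: c => // /eqP; rewrite ?(negbTE Y12) // eq_sym (negbTE Y12).
have <- : #|h @: setT| = t.*2.
  by rewrite card_imset // cardsT card_prod card_ord card_bool muln2.
apply/subset_leq_card/subsetP => _ /imsetP [p _ ->].
by rewrite inE h_in; apply/existsP; exists p.1.
Qed.

Lemma small_cover_card (Ys : {set {set 'I_n}}) :
  {in Ys, forall Y, small Y} -> \bigcup_(Y in Ys) Y = setT -> t.*2 + e <= #|Ys|.
Proof.
move=> smYs coverYs; set P := [set Y in Ys | [exists i : 'I_t, Y :&: part i != set0]].
have P_Ys : P \subset Ys by apply/subsetP => Y; rewrite inE => /andP [].
have P_card := small_cover_meet_parts smYs coverYs.
case E: e; last by rewrite addn0 (leq_trans P_card) ?subset_leq_card.
have z_lt : n.-1 < n by lia.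
have zpole : Ordinal z_lt \in pole by rewrite inE E eqxx.
have /bigcupP [Yz Yzs zYz] : Ordinal z_lt \in \bigcup_(Y in Ys) Y by rewrite coverYs inE.
have YzP : Yz \notin P.
  rewrite inE Yzs /=; apply/existsP => -[i /set0Pn [x]].
  rewrite inE => /andP [xYz xi].
  have := subsetP (proper_sub (small_proper (smYs _ Yzs) xYz xi)) _ zYz.
  by rewrite mem_part zpole.
apply: leq_trans (subset_leq_card (_ : Yz |: P \subset Ys)).
  by rewrite cardsU1 YzP addn1.
by rewrite subUset sub1set Yzs P_Ys.
Qed.

Lemma fam_kwise : kwise_intersecting (t.*2 + e).-1 fam.
Proof.
apply: contraT => /kwise_intersectingPn [G sGfam /andP [/andP [_ Gk] /eqP G0]].
have smYs : {in [set ~: A | A in G], forall Y, small Y}.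
  by move=> _ /imsetP [A /(subsetP sGfam) + ->]; rewrite inE.
have coverYs : \bigcup_(Y in [set ~: A | A in G]) Y = setT.
  rewrite big_imset /=; last by move=> ? ? _ _; apply: setC_inj.
  by rewrite -setC_bigcap G0 setC0.
have := small_cover_card smYs coverYs.
rewrite card_imset; last exact: setC_inj.
by move/leq_trans/(_ Gk); lia.
Qed.

Lemma not_small_cases W :
  ~~ small W ->
  [\/ exists i : 'I_t, part i \subset W,
      exists i j : 'I_t, [/\ i != j, W :&: part i != set0 & W :&: part j != set0]
    | exists i : 'I_t, (W :&: pole != set0) && (W :&: part i != set0)].
Proof.
rewrite /small negb_or => /andP [/subsetPn [x xW xpole] /existsPn notproper].
have xi : x \in part (cls x) := part_cls xpole.
have Wi : W :&: part (cls x) != set0 by apply/set0Pn; exists x; rewrite inE xW.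
have [sub | nsub] := boolP (part (cls x) \subset W); first by constructor 1; exists (cls x).
have /subsetPn [y yW yi] : ~~ (W \subset part (cls x)).
  by apply: contra (notproper (cls x)) => sWi; rewrite properE sWi.
have [ypole | ypole] := boolP (y \in pole).
  by constructor 3; exists (cls x); rewrite Wi andbT; apply/set0Pn; exists y; rewrite inE yW.
constructor 2; exists (cls x), (cls y); split => //.
  by apply: contraNneq yi => ->; apply: part_cls.
by apply/set0Pn; exists y; rewrite inE yW part_cls.
Qed.

Section Pieces.

Variables (W : {set 'I_n}) (a : 'I_t -> 'I_n).
Hypotheses (a_part : forall i, a i \in part i)
           (a_W : forall i : 'I_t, W :&: part i != set0 -> a i \in W).

Definition piece (o : option ('I_t * bool)) : {set 'I_n} :=
  if o is Some (i, b) then (part i :\: W) :&: (if b then [set a i] else [set~ a i])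
  else pole :\: W.

Lemma small_piece o : small (piece o).
Proof.
case: o => [[i b]|]; last by rewrite /small subsetDl.
apply/orP; right; apply/existsP; exists i; case: b.
  apply: sub_proper_trans (subsetIr _ _) _.
  by rewrite properEcard sub1set a_part cards1 card_part_gt1.
apply: sub_proper_trans (properD1 (a_part i)).
by apply/subsetP => x; rewrite !inE => /andP [/andP [_ ->] ->].
Qed.

Lemma piece_cover x : x \notin W -> exists o, x \in piece o.
Proof.
move=> xW; have [xpole | xpole] := boolP (x \in pole).
  by exists None; rewrite inE xpole xW.
have [xa | xa] := boolP (x == a (cls x)).
  by exists (Some (cls x, true)); rewrite /= in_setI in_setD xW part_cls // in_set1 xa.
by exists (Some (cls x, false)); rewrite /= in_setI in_setD xW part_cls // in_setC1 xa.
Qed.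

Lemma card_empty_pieces : ~~ small W -> 3 <= #|[set o | piece o == set0]| + e.
Proof.
move=> Wns; set E := [set o | _].
have E_none : pole \subset W -> None \in E by move=> sub; rewrite inE /= setD_eq0.
have E_meets (i : 'I_t) : W :&: part i != set0 -> Some (i, true) \in E.
  move/a_W => aW; rewrite inE /= -subset0; apply/subsetP => x.
  by rewrite in_setI in_setD in_set1 => /andP [/andP [xW _] /eqP xa]; rewrite xa aW in xW.
have E_sub (i : 'I_t) : part i \subset W -> Some (i, false) \in E.
  move=> sub; rewrite inE /= -subset0; apply/subsetP => x.
  by rewrite in_setI in_setD => /andP [/andP [xW xi] _]; rewrite (subsetP sub x xi) in xW.
have two_somes o1 o2 : o1 \in E -> o2 \in E -> o1 != o2 -> o1 != None -> o2 != None ->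
    3 <= #|E| + e.
  move=> o1E o2E o12 o1N o2N; have [ee | ne] := boolP e.
    by rewrite addn1 ltnS; apply/card_gt1P; exists o1, o2.
  have NE : None \in E by apply: E_none; apply/subsetP => x; rewrite inE (negbTE ne).
  rewrite addn0; apply/card_gt2P; exists o1, o2, None.
  by rewrite eq_sym in o1N; split; split.
case: (not_small_cases Wns) => [[i sub] | [i [j [ij Wi Wj]]] | [i /andP [Wpole Wi]]].
- have Wi : W :&: part i != set0 by rewrite (setIidPr sub) -card_gt0 ltnW ?card_part_gt1.
  apply: (two_somes (Some (i, true)) (Some (i, false))); rewrite ?E_meets ?E_sub //.
  by apply/eqP => -[].
- apply: (two_somes (Some (i, true)) (Some (j, true))); rewrite ?E_meets //.
  by apply: contraNneq ij => -[->].
- have /set0Pn [z] := Wpole; rewrite inE => /andP [zW zpole].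
  have ee : e by move: zpole; rewrite inE => /andP [].
  have pW : pole \subset W by apply/subsetP => y ypole; rewrite (pole_eq ypole zpole) zW.
  rewrite ee addn1 ltnS; apply/card_gt1P; exists None, (Some (i, true)).
  by rewrite E_none ?E_meets.
Qed.

End Pieces.

Lemma not_small_cover W :
  ~~ small W ->
  exists2 Ys : {set {set 'I_n}}, {in Ys, forall Y, small Y} &
    (#|Ys| + 2 <= t.*2 + e) && (~: W \subset \bigcup_(Y in Ys) Y).
Proof.
move=> Wns.
have /fin_all_exists [a aP] : forall i : 'I_t,
    exists x : 'I_n, x \in part i /\ (W :&: part i != set0 -> x \in W).
  move=> i; have [/set0Pn [x] | _] := boolP (W :&: part i != set0).
    by rewrite inE => /andP [xW xi]; exists x.
  by have /card_gt1P [x [_ [xi _ _]]] := card_part_gt1 i; exists x.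
have a_part i := (aP i).1; have a_W i := (aP i).2.
pose O := [set o | piece W a o != set0].
exists [set piece W a o | o in O].
  by move=> _ /imsetP [o _ ->]; apply: small_piece.
apply/andP; split.
  have cardE := card_empty_pieces a_W Wns.
  have cardO : #|O| + #|~: O| = t.*2.+1.
    by rewrite cardsC card_option card_prod card_ord card_bool muln2.
  have EO : ~: O = [set o | piece W a o == set0] by apply/setP => o; rewrite !inE negbK.
  rewrite EO in cardO; apply: leq_trans (leq_add (leq_imset_card (piece W a) O) (leqnn 2)) _.
  by move: cardE cardO; set cO := #|O|; set cE := #|[set o | _]|; lia.
apply/subsetP => x; rewrite in_setC => /(piece_cover a) [o xo].
apply/bigcupP; exists (piece W a o) => //; apply/imsetP; exists o => //.
by rewrite inE; apply/set0Pn; exists x.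
Qed.

Lemma fam_maximal : maximal_kwise_intersecting (t.*2 + e).-1 fam.
Proof.
apply/(maximal_kwise_intersectingP fam_kwise) => B; rewrite inE => Bns.
have [Ys smYs /andP [Ysk coverB]] := not_small_cover Bns.
exists [set ~: Y | Y in Ys].
  by apply/subsetP => _ /imsetP [Y /smYs Ysm ->]; rewrite inE setCK.
rewrite card_imset; last exact: setC_inj.
rewrite big_imset /=; last by move=> ? ? _ _; apply: setC_inj.
rewrite -setC_bigcup -setDE setD_eq0 -[B]setCK coverB andbT.
by move: Ysk; set cY := #|Ys|; lia.
Qed.

Definition block (o : option 'I_t) : {set 'I_n} := if o is Some i then part i else pole.

Lemma small_sub_block Y : small Y -> exists o, Y \subset block o.
Proof.
by case/orP => [Ypole | /existsP [i /proper_sub Yi]]; [exists None | exists (Some i)].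
Qed.

Lemma card_block o : #|block o| <= (n %/ t).+1.
Proof.
case: o => [i|] /=; last first.
  apply: leq_trans (_ : #|pole| <= 1) _ => //.
  by apply/card_le1_eqP => x y xp yp; apply: pole_eq yp xp.
have quo_lt (x : 'I_n) : x %/ t < (n %/ t).+1 by rewrite ltnS leq_div2r // ltnW.
rewrite -[X in _ <= X]card_ord; apply: (@leq_card_in _ _ (fun x => Ordinal (quo_lt x))).
move=> x y; rewrite !mem_part => /andP [_ /eqP xi] /andP [_ /eqP yi] [xy].
by apply: val_inj; rewrite /= (divn_eq x t) (divn_eq y t) xy xi yi.
Qed.

Lemma card_fam : #|fam| <= t.+1 * 2 ^ (n %/ t).+1.
Proof.
rewrite -(card_imset fam (@setC_inj _)).
apply: (@leq_trans #|\bigcup_o powerset (block o)|).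
  apply/subset_leq_card/subsetP => _ /imsetP [A + ->].
  rewrite inE => /small_sub_block [o sub].
  by apply/bigcupP; exists o; rewrite ?powersetE.
have <- : #|{: option 'I_t}| = t.+1 by rewrite card_option card_ord.
apply: card_bigcup_leq => o.
by rewrite card_powerset leq_pexp2l ?card_block.
Qed.

End Construction.

(** * Bounds on f(n, k) *)

Lemma pred_double_uphalf k : ((uphalf k).*2 + ~~ odd k).-1 = k.
Proof.
rewrite uphalf_half -[RHS]odd_double_half.
by case: (odd k) => /=; rewrite ?doubleS ?addn0 ?addn1.
Qed.

Lemma leq_expn_mul4 N m j : 1 < N -> 0 < j -> N <= m + m.+1 ^ j -> N <= (4 * m) ^ j.
Proof.
move=> N_gt1 j_gt0 le_Nm.
have m_gt0 : 0 < m by case: m le_Nm => [|//]; rewrite exp1n; lia.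
apply: leq_trans le_Nm _.
have h1 : m.+1 ^ j <= (2 * m) ^ j by rewrite leq_exp2r //; lia.
have h2 : m <= (2 * m) ^ j.
  by apply: leq_trans (_ : 2 * m <= _); [lia | rewrite -{1}(expn1 (2 * m)) leq_pexp2l; lia].
have h3 : 2 <= 2 ^ j by rewrite -{1}(expn1 2) leq_pexp2l.
have -> : (4 * m) ^ j = 2 ^ j * (2 * m) ^ j by rewrite -expnMn mulnA.
by move: h1 h2 h3; set X := (2 * m) ^ j; set Y := 2 ^ j; set Z := m.+1 ^ j; nia.
Qed.

Lemma f_mkwi_lower n k : 0 < n -> 1 < k -> 2 ^ n <= (4 * f_mkwi n k) ^ k.-1.
Proof.
move=> n_gt0 k_gt1.
have [F maxF ->] := f_mkwi_attained (maximal_star (Ordinal n_gt0) k_gt1).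
apply: leq_expn_mul4 (card_maximal_lower maxF); last by rewrite -ltnS prednK // ltnW.
by rewrite -{1}(expn0 2) ltn_exp2l.
Qed.

Lemma f_mkwi_upper n k :
  1 < k -> 0 < n -> f_mkwi n k <= 2 ^ (uphalf k).*2.+1 * (uphalf k).+1 * 2 ^ (n %/ uphalf k).
Proof.
move=> k_gt1 n_gt0; set t := uphalf k.
have t_gt0 : 0 < t by rewrite /t uphalf_half; lia.
have q_gt0 : 0 < 2 ^ (n %/ t) by rewrite expn_gt0.
case: (leqP n t.*2) => [n_small | n_large].
  have [F maxF ->] := f_mkwi_attained (maximal_star (Ordinal n_gt0) k_gt1).
  apply: leq_trans (max_card _) _; rewrite card_finset card_ord.
  apply: leq_trans (leq_pexp2l _ n_small) _ => //.
  by rewrite [2 ^ t.*2.+1]expnS; set X := 2 ^ t.*2; set Y := 2 ^ (n %/ t); nia.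
have maxF := fam_maximal (~~ odd k) t_gt0 n_large; rewrite pred_double_uphalf in maxF.
apply: leq_trans (f_mkwi_leq maxF) _; apply: leq_trans (card_fam _ _ _) _ => //.
have : 2 <= 2 ^ t.*2.+1 by rewrite -{1}(expn1 2) leq_pexp2l.
by rewrite [2 ^ (n %/ t).+1]expnS; set X := 2 ^ t.*2.+1; set Y := 2 ^ (n %/ t); nia.
Qed.

Lemma INR_expn a b : INR (a ^ b) = pow (INR a) b.
Proof. by elim: b => [|b IH] //=; rewrite expnS mulnE mult_INR IH. Qed.

Lemma Rpower2_div_leq n j m : 0 < j -> 2 ^ n <= m ^ j -> (Rpower 2 (INR n / INR j) <= INR m)%R.
Proof.
move=> j_gt0 le_nm.
have m_gt0 : 0 < m.
  by move: (leq_trans (expn_gt0 2 n) le_nm); rewrite expn_gt0 eqn0Ngt j_gt0 orbF.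
have jR : (0 < INR j)%R by apply/lt_0_INR/ltP.
have mR : (0 < INR m)%R by apply/lt_0_INR/ltP.
have -> : Rpower 2 (INR n / INR j) = Rpower (Rpower 2 (INR n)) (/ INR j).
  by rewrite Rpower_mult.
have -> : INR m = Rpower (Rpower (INR m) (INR j)) (/ INR j).
  by rewrite Rpower_mult Rinv_r ?Rpower_1 //; lra.
apply: Rle_Rpower_l; first by left; apply: Rinv_0_lt_compat.
split; first exact: exp_pos.
rewrite !Rpower_pow; [|lra|lra].
by have := le_INR _ _ (elimT leP le_nm); rewrite !INR_expn.
Qed.

Lemma expn2_quo_le_Rpower n t : 0 < t -> (INR (2 ^ (n %/ t)) <= Rpower 2 (INR n / INR t))%R.
Proof.
move=> t_gt0; rewrite INR_expn -Rpower_pow; last by rewrite /=; lra.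
apply: Rle_Rpower; first by rewrite /=; lra.
have tR : (0 < INR t)%R by apply/lt_0_INR/ltP.
have qt : (INR (n %/ t) * INR t <= INR n)%R.
  by rewrite -mult_INR; apply/le_INR/leP/leq_divM.
apply: (Rmult_le_reg_r (INR t)) => //.
by rewrite /Rdiv Rmult_assoc Rinv_l; lra.
Qed.

Theorem proposition4p1 :
  forall k : nat, (4 <= k)%N ->
  exists c d : R, (0 < c)%R /\ (0 < d)%R /\
    forall n : nat, (1 <= n)%N ->
      (c * Rpower 2 (INR n / INR (subn k 1)) <= INR (f_mkwi n k))%R /\
      (INR (f_mkwi n k) <= d * Rpower 2 (INR n / INR (uphalf k)))%R.
Proof.
move=> k k_ge4; have k_gt1 : 1 < k by lia.
set t := uphalf k; have t_gt0 : 0 < t by rewrite /t uphalf_half; lia.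
exists (/ 4)%R, (INR (2 ^ t.*2.+1 * t.+1)); split; first lra.
split; first by apply/lt_0_INR/ltP; rewrite muln_gt0 expn_gt0.
move=> n n_gt0; split.
  have k1_gt0 : 0 < k.-1 by lia.
  have := Rpower2_div_leq k1_gt0 (f_mkwi_lower n_gt0 k_gt1).
  rewrite subn1 mulnE mult_INR (_ : INR 4 = 4%R); last by rewrite /=; lra.
  lra.
apply: Rle_trans (le_INR _ _ (elimT leP (f_mkwi_upper k_gt1 n_gt0))) _.
rewrite mulnE mult_INR; apply: Rmult_le_compat_l; first exact: pos_INR.
exact: expn2_quo_le_Rpower.
Qed.
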